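(* Let $p$ be an external position with $m=|B(p)|\ge 2$, and let $j_1\le\dots\le j_{n-m}$ be the values $\bar p_i$, $i\notin B(p)$, in non-decreasing order. Then: (a) the independent rotation group satisfies $G_{rot}(p)=\mathrm{Alt}(B(p))$ if $m=n$ and $G_{rot}(p)=\mathrm{Sym}(B(p))$ if $m<n$; (b) the dependent rotation group satisfies $\overline{G}_{rot}(p)=\mathrm{Alt}(B(p))$ if $m=n$ or $j_1<j_2<\dots<j_{n-m}<(k-1)/2$, and $\overline{G}_{rot}(p)=\mathrm{Sym}(B(p))$ if $m<n$ and either $j_{n-m}=(k-1)/2$ or there is $r$ with $j_r=j_{r+1}<(k-1)/2$.
   Context: Fix integers $k\ge 2$, $n\ge 3$, $M=\{0,\dots,k-1\}$. Positions are $p\in M^n$ (cubie $\prod_i[p_i,p_i+1]\subset[0,k]^n$); $B(p)=\{i:p_i\in\{0,k-1\}\}$, $p$ external if $B(p)\ne\emptyset$; for $x\in\{1,\dots,k-2\}$, $\bar x=\min(x,k-1-x)$. For distinct $i,j$, $\psi_{i,j}:M^n\to M^n$ is $(\psi_{i,j}p)_i=k-1-p_j$, $(\psi_{i,j}p)_j=p_i$, other coordinates unchanged; note $B(\psi_{i,j}p)=\tau_{ij}(B(p))$ with $\tau_{ij}$ the transposition of $i,j$. A move is given by distinct $i,j$ and constants $c_l\in M$ ($l\notin\{i,j\}$) and applies $\psi_{i,j}$ to all positions $p$ with $p_l=c_l$ ($l\notin\{i,j\}$), fixing the others; a combination is a finite sequence of moves. Orientation faces: the cubie at an external $p$ has $|B(p)|$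 orientation faces indexed by $l\in B(p)$, face $l$ being the intersection of the cubie with the hyperplanes $x_s=0$ (if $p_s=0$) or $x_s=k$ (if $p_s=k-1$) for $s\in B(p)\setminus\{l\}$. Let $X=\{(p,l): p\text{ external}, l\in B(p)\}$; a move with parameters $i,j$ acts on $X$ by $(p,l)\mapsto(\psi_{i,j}(p),\tau_{ij}(l))$ for $p$ in its layer and fixes $(p,l)$ otherwise; a combination acts on $X$ by composition (this tracks where each orientation face of each cubie goes). The dependent rotation group $\overline{G}_{rot}(p)$ is the set of permutations of $B(p)$ induced on $\{p\}\times B(p)$ by combinations $g$ with $g(p)=p$. The independent rotation group $G_{rot}(p)$ is the group of permutations of the orientation faces of the cubie at $p$ (identified with permutations of $B(p)$) induced by orientation-preserving isometries of $\mathbb{R}^n$ that map the cubie onto itself and map its set of orientation faces onto itself. *)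

From HB Require Import structures.
From mathcomp Require Import all_boot all_order all_algebra all_fingroup.
From mathcomp Require Import reals.
Set Implicit Arguments. Unset Strict Implicit. Unset Printing Implicit Defensive.
Import Order.TTheory GRing.Theory Num.Theory.

Definition pos (k n : nat) := {ffun 'I_n -> 'I_k}.

Definition Bset k n (p : pos k n) : {set 'I_n} :=
  [set i | (val (p i) == 0) || (val (p i) == k.-1)].

Definition psi k n (i j : 'I_n) (p : pos k n) : pos k n :=
  [ffun l => if l == i then rev_ord (p j) else if l == j then p i else p l].

(* A move: indices i j and constants c_l (only used for l outside {i,j}). *)
Record move (k n : nat) := Move { mv_i : 'I_n; mv_j : 'I_n; mv_c : pos k n }.

Definition valid_move k n (mv : move k n) : bool := mv_i mv != mv_j mv.

Definition in_layer k n (mv : move k n) (p : pos k n) : bool :=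
  [forall l, ((l != mv_i mv) && (l != mv_j mv)) ==> (p l == mv_c mv l)].

Definition move_pos k n (mv : move k n) (p : pos k n) : pos k n :=
  if in_layer mv p then psi (mv_i mv) (mv_j mv) p else p.

(* action of a move on pairs (p,l) (orientation faces) *)
Definition move_X k n (mv : move k n) (x : pos k n * 'I_n) : pos k n * 'I_n :=
  if in_layer mv x.1 then (psi (mv_i mv) (mv_j mv) x.1, tperm (mv_i mv) (mv_j mv) x.2)
  else x.

Definition comb_pos k n (g : seq (move k n)) (p : pos k n) : pos k n :=
  foldl (fun q mv => move_pos mv q) p g.

Definition comb_X k n (g : seq (move k n)) (x : pos k n * 'I_n) : pos k n * 'I_n :=
  foldl (fun y mv => move_X mv y) x g.

Definition SymB n (B : {set 'I_n}) (s : {perm 'I_n}) : Prop := perm_on B s.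
Definition AltB n (B : {set 'I_n}) (s : {perm 'I_n}) : Prop :=
  perm_on B s /\ ~~ odd_perm s.

Definition dep_rot k n (p : pos k n) (s : {perm 'I_n}) : Prop :=
  perm_on (Bset p) s /\
  exists g : seq (move k n),
    all (@valid_move k n) g /\ comb_pos g p = p /\
    forall l, l \in Bset p -> comb_X g (p, l) = (p, s l).

Local Open Scope ring_scope.
Definition cubie (R : realType) k n (p : pos k n) (x : 'rV[R]_n) : Prop :=
  forall i, ((val (p i))%:R <= x ord0 i) /\ (x ord0 i <= (val (p i)).+1%:R).

Definition oface (R : realType) k n (p : pos k n) (l : 'I_n) (x : 'rV[R]_n) : Prop :=
  cubie p x /\
  forall s, s \in Bset p -> s != l ->
    x ord0 s = (if val (p s) == 0 then 0 else k%:R).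

Definition maps_onto (T1 T2 : Type) (f : T1 -> T2) (S : T1 -> Prop) (T : T2 -> Prop) : Prop :=
  forall y, T y <-> exists2 x, S x & f x = y.

(* orientation-preserving isometries of R^n: x |-> x A + b, A orthogonal, det A = 1 *)
Definition proper_orth (R : realType) n (A : 'M[R]_n) : Prop :=
  A *m A^T = 1%:M /\ \det A = 1.

Definition ind_rot (R : realType) k n (p : pos k n) (s : {perm 'I_n}) : Prop :=
  perm_on (Bset p) s /\
  exists (A : 'M[R]_n) (b : 'rV[R]_n),
    proper_orth A /\
    maps_onto (fun x => x *m A + b) (@cubie R k n p) (@cubie R k n p) /\
    forall l, l \in Bset p ->
      maps_onto (fun x => x *m A + b) (@oface R k n p l) (@oface R k n p (s l)).

Local Close Scope ring_scope.
Definition barv (k x : nat) : nat := minn x (k.-1 - x).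

Definition jseq k n (p : pos k n) : seq nat :=
  sort leq [seq barv k (val (p i)) | i <- enum (~: Bset p)].

(* A move acts on a cubie like a quarter turn, i.e. like a signed
   permutation matrix of determinant 1. Every state reachable from the position p
   is therefore p permuted by some sigma with the coordinates of a set F
   reflected (x |-> k-1-x), where sign(sigma) = (-1)^|F|; conversely every such
   state is reachable, using only moves taken in the layer of the current
   position. If such a state is p itself, sigma maps each coordinate outside B(p)
   to one with the same value of \bar p_i, reflecting it only if it is central,
   while on B(p) the number of reflections is even. So sigma is even on B(p) when
   the \bar p_i are distinct and non-central; a central coordinate or a repeated
   value supplies an odd correction outside B(p), making all of Sym(B(p))
   attainable.
   The symmetries of a cubie preserving its orientation faces are the signed
   permutation matrices centred at the cubie whose signs on B(p) are forced by
   the faces. Their determinant is sign(sigma) when B(p) is everything, and is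
   freely adjustable through a sign outside B(p) otherwise. *)

From HB Require Import structures.
From mathcomp Require Import all_boot all_order all_algebra all_fingroup.
From mathcomp Require Import reals.
From mathcomp Require Import zify lra.

Set Implicit Arguments. Unset Strict Implicit. Unset Printing Implicit Defensive.
Import Order.TTheory GRing.Theory Num.Theory.

Definition rev_if k (b : bool) (x : 'I_k) : 'I_k := if b then rev_ord x else x.

Section Reflection.
Variable k : nat.
Implicit Types x y : 'I_k.

Lemma barv_rev_ord x : barv k (rev_ord x) = barv k x.
Proof. rewrite /barv /=; have := ltn_ord x; lia. Qed.

Lemma barv_rev_if b x : barv k (rev_if b x) = barv k x.
Proof. by case: b; rewrite /= ?barv_rev_ord. Qed.

Lemma barv_eq0 x : (barv k x == 0) = (val x == 0) || (val x == k.-1).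
Proof. by rewrite /barv; case: x => x /= ltxk; apply/idP/idP; lia. Qed.

Lemma barv_eq_cases x y : barv k x = barv k y -> y = x \/ y = rev_ord x.
Proof.
rewrite /barv; case: x => x /= ltxk; case: y => y /= ltyk e.
have [exy|exy] : y = x \/ y = k - x.+1 by lia.
  by left; apply: val_inj.
by right; apply: val_inj.
Qed.

Lemma rev_ord_fixed x : (rev_ord x == x) = (2 * barv k x == k.-1).
Proof.
rewrite /barv -(inj_eq val_inj) /=.
by case: x => x /= ltxk; apply/idP/idP; lia.
Qed.

Lemma rev_if_fixed b x : rev_ord x != x -> (rev_if b x == x) = ~~ b.
Proof. by move=> /negbTE rx; case: b; rewrite /= ?rx ?eqxx. Qed.

End Reflection.

Lemma rev_ord_boundary k (x : 'I_k) : 1 < k -> barv k x = 0 -> rev_ord x != x.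
Proof. by move=> k2 bx0; rewrite rev_ord_fixed bx0; lia. Qed.

Lemma in_Bset k n (p : pos k n) l : (l \in Bset p) = (barv k (p l) == 0).
Proof. by rewrite inE barv_eq0. Qed.

Lemma Bset_coord_cases k n (p : pos k n) l l' : l \in Bset p -> l' \in Bset p ->
  p l' = p l \/ p l' = rev_ord (p l).
Proof. by rewrite !in_Bset => /eqP bl /eqP bl'; apply: barv_eq_cases; rewrite bl bl'. Qed.

Lemma odd_card_perm_changes (T : finType) (s : {perm T}) (c : pred T) :
  ~~ odd #|[set x | c (s x) != c x]|.
Proof.
set Z := [set x | c x]; set W := [set x | c (s x)].
have cardW : #|W| = #|Z|.
  have -> : W = s @^-1: Z by apply/setP => x; rewrite !inE.
  by rewrite card_preimset //; apply: perm_inj.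
have -> : [set x | c (s x) != c x] = (Z :\: W) :|: (W :\: Z).
  by apply/setP => x; rewrite !inE; case: (c x); case: (c (s x)).
rewrite cardsU.
have -> : (Z :\: W) :&: (W :\: Z) = set0.
  by apply/setP => x; rewrite !inE; case: (c x); case: (c (s x)).
by rewrite cards0 subn0 !cardsD cardW setIC addnn odd_double.
Qed.

(** * Reachable signed positions *)

Definition toggle (T : finType) (F : {set T}) z := if z \in F then F :\ z else z |: F.

Section Toggle.
Variable T : finType.
Implicit Types (F : {set T}) (z : T).

Lemma in_toggle F z x : (x \in toggle F z) = if x == z then z \notin F else x \in F.
Proof.
rewrite /toggle; case: (eqVneq x z) => [->|xz]; case: ifP => zF;
  by rewrite !inE ?eqxx ?zF ?(negbTE xz).
Qed.

Lemma toggleK F z : toggle (toggle F z) z = F.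
Proof. by apply/setP => x; rewrite !in_toggle eqxx negbK; case: eqP => [->|]. Qed.

Lemma odd_toggle F z : odd #|toggle F z| = ~~ odd #|F|.
Proof.
rewrite /toggle; case: ifP => zF; last by rewrite cardsU1 zF.
by rewrite (cardsD1 z F) zF /= negbK.
Qed.

End Toggle.

Definition track k n (g : seq (move k n)) (st : pos k n * {perm 'I_n}) :=
  foldl (fun st mv => if in_layer mv st.1
     then (psi (mv_i mv) (mv_j mv) st.1, (st.2 * tperm (mv_i mv) (mv_j mv))%g)
     else st) st g.

Lemma comb_pos_track k n (g : seq (move k n)) q s :
  comb_pos g q = (track g (q, s)).1.
Proof.
elim: g q s => [|mv g IH] q s //=.
by rewrite /comb_pos /= /move_pos; case: ifP => _; apply: IH.
Qed.

Lemma comb_X_track k n (g : seq (move k n)) q (s : {perm 'I_n}) x :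
  comb_X g (q, s x) = ((track g (q, s)).1, (track g (q, s)).2 x).
Proof.
elim: g q s => [|mv g IH] q s //=.
rewrite /comb_X /= /move_X /=; case: ifP => _; last exact: IH.
by rewrite -permM; apply: IH.
Qed.

Definition reachable k n (p q : pos k n) (s : {perm 'I_n}) :=
  exists2 g : seq (move k n), all (@valid_move k n) g & track g (p, 1%g) = (q, s).

Section SignedPositions.
Variables (k n : nat) (p : pos k n).
Implicit Types (q : pos k n) (s : {perm 'I_n}) (F : {set 'I_n}).

Definition spos s F : pos k n :=
  [ffun x => rev_if ((s^-1)%g x \in F) (p ((s^-1)%g x))].

Lemma spos1 : spos 1 set0 = p.
Proof. by apply/ffunP => x; rewrite ffunE invg1 perm1 inE. Qed.

Lemma spos_fixedP s F : spos s F = p <-> forall l, p (s l) = rev_if (l \in F) (p l).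
Proof.
split=> [e l | fixp]; first by rewrite -{1}e ffunE permK.
by apply/ffunP => x; rewrite ffunE -fixp permKV.
Qed.

Lemma psi_spos s F i j : i != j ->
  psi i j (spos s F) = spos (s * tperm i j) (toggle F ((s^-1)%g j)).
Proof.
move=> ij; apply/ffunP => x; rewrite !ffunE invMg permM tpermV.
have sV_inj := can_eq (permK s^-1).
case: (eqVneq x i) => [->|xi].
  by rewrite tpermL in_toggle eqxx; case: (_ \in F); rewrite /= ?rev_ordK.
case: (eqVneq x j) => [->|xj]; first by rewrite tpermR in_toggle sV_inj (negbTE ij).
by rewrite tpermD 1?eq_sym // in_toggle sV_inj (negbTE xj).
Qed.

Lemma reachable_refl : reachable p p 1.
Proof. by exists [::]. Qed.

(* The move with layer constants [q] always applies to [q]. *)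
Lemma reachable_psi q s i j : reachable p q s -> i != j ->
  reachable p (psi i j q) (s * tperm i j).
Proof.
move=> [g vg tg] ij; exists (rcons g (Move i j q)).
  by rewrite all_rcons vg andbT.
rewrite /track foldl_rcons -/(track g _) tg /=.
suff -> : in_layer (Move i j q) q by [].
by apply/forallP => l; apply/implyP.
Qed.

Lemma reachable_spos1 F : ~~ odd #|F| -> reachable p (spos 1 F) 1.
Proof.
have [N] := ubnP #|F|; elim: N F => // N IH F ltFN evenF.
have [->|[x xF]] := set_0Vmem F; first by rewrite spos1; apply: reachable_refl.
have [y yFx] : exists y, y \in F :\ x.
  by apply/card_gt0P; move: evenF; rewrite (cardsD1 x F) xF; case: #|_|.
have [yx yF] := setD1P yFx; have xy : x != y by rewrite eq_sym.
have cardFxy : #|F :\ x :\ y|.+1 = #|F :\ x| by rewrite (cardsD1 y (F :\ x)) yFx.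
have cardFx : #|F :\ x|.+1 = #|F| by rewrite (cardsD1 x F) xF.
have := reachable_psi (reachable_psi (IH (F :\ x :\ y) _ _) xy) xy.
rewrite !psi_spos // mul1g tperm2 tpermV tpermR invg1 perm1.
have -> : toggle (toggle (F :\ x :\ y) y) x = F.
  apply/setP => z; rewrite !in_toggle !inE eqxx (negbTE xy) /=.
  case: (eqVneq z x) => [->|_]; first by rewrite eqxx xF.
  by case: (eqVneq z y) => [->|]; rewrite ?yF.
by apply; [lia | move: evenF; rewrite -cardFx -cardFxy /= negbK].
Qed.

Lemma reachable_spos s F : odd_perm s = odd #|F| -> reachable p (spos s F) s.
Proof.
have [ts -> dts] := prod_tpermP s.
elim/last_ind: ts F dts => [|ts [i j] IH] F; rewrite ?big_nil.
  by move=> _; rewrite odd_perm1 => /esym/negbT; apply: reachable_spos1.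
rewrite all_rcons big_rcons /= => /andP[ij dts].
set s' := (\prod_(t <- ts) tperm t.1 t.2)%g.
rewrite odd_permM odd_tperm ij addbT => parF.
rewrite -[F](toggleK F ((s'^-1)%g j)) -psi_spos //.
by apply: reachable_psi => //; apply: IH; rewrite // odd_toggle -parF negbK.
Qed.

Lemma track_spos g s F : all (@valid_move k n) g -> odd_perm s = odd #|F| ->
  exists s' F', track g (spos s F, s) = (spos s' F', s') /\ odd_perm s' = odd #|F'|.
Proof.
elim: g s F => [|mv g IH] s F /=; first by exists s, F.
case/andP => [ij vg] parF; rewrite /valid_move in ij; rewrite /track /= -/(track g _).
case: ifP => _; last exact: IH.
rewrite psi_spos //; apply: IH => //.
by rewrite odd_permM odd_tperm ij odd_toggle parF addbT.
Qed.

Lemma reachableP q s : reachable p q s <-> exists2 F, q = spos s F & odd_perm s = odd #|F|.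
Proof.
split=> [[g vg tg] | [F -> parF]]; last exact: reachable_spos.
have [|s' [F' [tg' parF']]] := track_spos (s := 1) (F := set0) vg.
  by rewrite odd_perm1 cards0.
by move: tg; rewrite spos1 in tg'; rewrite tg' => -[<- <-]; exists F'.
Qed.

Lemma reachable_selfP s : reachable p p s <->
  exists2 F : {set 'I_n}, (forall l, p (s l) = rev_if (l \in F) (p l)) & odd_perm s = odd #|F|.
Proof.
rewrite reachableP; split=> -[F fixp parF]; exists F => //.
  by apply/spos_fixedP.
by apply/esym/spos_fixedP.
Qed.

Lemma dep_rotP s : dep_rot p s <->
  perm_on (Bset p) s /\ exists2 sg, reachable p p sg & {in Bset p, s =1 sg}.
Proof.
split=> [[ps [g [vg [cp cx]]]] | [ps [sg [g vg tg] esg]]]; split=> //.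
  have tp : (track g (p, 1%g)).1 = p by rewrite -(comb_pos_track g p 1) cp.
  exists (track g (p, 1%g)).2; first by exists g; rewrite // [LHS]surjective_pairing tp.
  by move=> l lB; have := comb_X_track g p 1 l; rewrite perm1 cx // => -[].
exists g; split=> //; split; first by rewrite (comb_pos_track g p 1) tg.
by move=> l lB; rewrite -[in LHS](perm1 l) comb_X_track tg esg.
Qed.

End SignedPositions.

(** * The dependent rotation group *)

Section DependentRotations.
Variables (k n : nat) (p : pos k n).
Hypothesis k2 : 1 < k.
Local Notation B := (Bset p).
Implicit Types (s : {perm 'I_n}) (F : {set 'I_n}).

Lemma rev_ord_Bset l : l \in B -> rev_ord (p l) != p l.
Proof. by rewrite in_Bset => /eqP; apply: rev_ord_boundary. Qed.

Lemma Bset_changes_even s : perm_on B s -> ~~ odd #|[set l | p (s l) != p l]|.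
Proof.
move=> ps; rewrite (_ : [set l | _] = [set l | (val (p (s l)) == 0) != (val (p l) == 0)]).
  exact: odd_card_perm_changes.
apply/setP => l; rewrite !inE.
have [lB|lB] := boolP (l \in B); last by rewrite (out_perm ps lB) !eqxx.
have slB : s l \in B by rewrite (perm_closed _ ps).
have [->|->] := Bset_coord_cases lB slB; first by rewrite !eqxx.
rewrite (rev_ord_Bset lB); move: lB; rewrite inE /=.
by case: (p l) => x /= ltxk; case/orP => /eqP ->; lia.
Qed.

Lemma dep_rot_extend s (t : {perm 'I_n}) F :
  perm_on B s -> perm_on (~: B) t -> F \subset ~: B ->
  (forall l, l \notin B -> p (t l) = rev_if (l \in F) (p l)) ->
  odd_perm s (+) odd_perm t = odd #|F| -> dep_rot p s.
Proof.
move=> ps pt FB fixt parF; apply/dep_rotP; split=> //.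
set Fs := [set l | p (s l) != p l].
have tsB l : l \in B -> t (s l) = s l.
  by move=> lB; rewrite (out_perm pt) // inE negbK (perm_closed _ ps).
have notF l : l \in B -> l \notin F.
  by move=> lB; apply: contraL lB => /(subsetP FB); rewrite inE.
exists (s * t)%g; last by move=> l lB; rewrite permM tsB.
apply/reachable_selfP; exists (Fs :|: F) => [l|].
  rewrite permM in_setU inE.
  have [lB|lB] := boolP (l \in B); last by rewrite !(out_perm ps lB) eqxx fixt.
  rewrite tsB // (negbTE (notF l lB)) orbF.
  have slB : s l \in B by rewrite (perm_closed _ ps).
  by case: (Bset_coord_cases lB slB) => ->; rewrite ?eqxx // rev_ord_Bset.
have FsF : Fs :&: F = set0.
  apply/setP => l; rewrite !inE; have [lB|lB] := boolP (l \in B).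
    by rewrite (negbTE (notF l lB)) andbF.
  by rewrite (out_perm ps lB) eqxx.
by rewrite cardsU FsF cards0 subn0 oddD (negbTE (Bset_changes_even ps)) odd_permM.
Qed.

Lemma Alt_dep_rot s : AltB B s -> dep_rot p s.
Proof.
case=> ps evens; apply: (dep_rot_extend ps (perm_on1 _) (sub0set _)) => [l _|].
  by rewrite perm1 inE.
by rewrite odd_perm1 cards0 addbF (negbTE evens).
Qed.

Lemma dep_rot_even s :
  {in ~: B &, injective (fun l => barv k (p l))} ->
  {in ~: B, forall l, rev_ord (p l) != p l} ->
  dep_rot p s -> ~~ odd_perm s.
Proof.
move=> injB noctr /dep_rotP[ps [sg /reachable_selfP[F fixp parF] esg]].
have out_fixed l : l \notin B -> sg l = l /\ l \notin F.
  move=> lB; have lB' : l \in ~: B by rewrite inE.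
  have bsg : barv k (p (sg l)) = barv k (p l) by rewrite fixp barv_rev_if.
  have sgl : sg l = l by apply: injB; rewrite // inE in_Bset bsg -in_Bset.
  split=> //; apply/negP => lF.
  by move: (noctr l lB'); rewrite -{2}sgl fixp lF eqxx.
have ssg : s = sg.
  apply/permP => l; have [lB|lB] := boolP (l \in B); first exact: esg.
  by rewrite (out_perm ps lB) (out_fixed l lB).1.
have eF : F = [set l | p (s l) != p l].
  apply/setP => l; rewrite inE ssg fixp.
  have [lB|lB] := boolP (l \in B); last by rewrite (negbTE (out_fixed l lB).2) eqxx.
  by rewrite rev_if_fixed ?negbK ?rev_ord_Bset.
by rewrite ssg parF eF; apply: Bset_changes_even.
Qed.

Lemma dep_rot_Alt :
  {in ~: B &, injective (fun l => barv k (p l))} ->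
  {in ~: B, forall l, rev_ord (p l) != p l} ->
  forall s, dep_rot p s <-> AltB B s.
Proof.
move=> injB noctr s; split=> [rs | /Alt_dep_rot //].
by split; [case/dep_rotP: rs | apply: dep_rot_even].
Qed.

Lemma dep_rot_Sym (t : {perm 'I_n}) F :
  perm_on (~: B) t -> F \subset ~: B ->
  (forall l, l \notin B -> p (t l) = rev_if (l \in F) (p l)) ->
  odd_perm t != odd #|F| ->
  forall s, dep_rot p s <-> SymB B s.
Proof.
move=> pt FB fixt oddt s; split=> [/dep_rotP[] // | ps].
have [evens|odds] := boolP (~~ odd_perm s); first exact: Alt_dep_rot.
apply: (dep_rot_extend ps pt FB fixt).
by rewrite (negbNE odds); move: oddt; case: (odd_perm t); case: (odd _).
Qed.

Lemma dep_rot_Sym_central t : t \notin B -> rev_ord (p t) = p t ->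
  forall s, dep_rot p s <-> SymB B s.
Proof.
move=> tB ctr; apply: (@dep_rot_Sym 1 [set t]) => [||l _|].
- exact: perm_on1.
- by rewrite sub1set inE.
- by rewrite perm1 inE; case: eqP => [->|].
- by rewrite odd_perm1 cards1.
Qed.

Lemma dep_rot_Sym_pair t u : t \notin B -> u \notin B -> t != u ->
  barv k (p t) = barv k (p u) -> forall s, dep_rot p s <-> SymB B s.
Proof.
move=> tB uB tu btu.
have [b ptu] : exists b, p u = rev_if b (p t).
  by case: (barv_eq_cases btu) => ->; [exists false | exists true].
have tuB : [set t; u] \subset ~: B by rewrite subUset !sub1set !in_setC tB.
apply: (@dep_rot_Sym (tperm t u) (if b then [set t; u] else set0)).
- exact: subset_trans (tperm_on t u) tuB.
- by case: b {ptu}; rewrite ?sub0set.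
- move=> l _; have inF : (l \in if b then [set t; u] else set0) = b && (l \in [set t; u]).
    by case: b {ptu}; rewrite ?inE.
  rewrite inF !inE; case: (eqVneq l t) => [->|lt]; first by rewrite tpermL andbT.
  case: (eqVneq l u) => [->|lu]; last by rewrite tpermD 1?eq_sym // andbF.
  by rewrite tpermR ptu andbT; case: b {inF ptu}; rewrite /= ?rev_ordK.
- by rewrite odd_tperm tu; case: b {ptu}; rewrite ?cards0 ?cards2 ?tu.
Qed.

End DependentRotations.

Section JSequence.
Variables (k n : nat) (p : pos k n).
Local Notation B := (Bset p).

Lemma notin_Bset_exists : #|B| < n -> exists l, l \notin B.
Proof.
move=> ltBn; have /card_gt0P[l] : 0 < #|~: B| by have := cardsC B; rewrite card_ord; lia.
by rewrite in_setC; exists l.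
Qed.

Lemma Bset_full : #|B| = n -> forall l, l \in B.
Proof.
move=> eqBn l; apply: contraT => lB.
have : 0 < #|~: B| by apply/card_gt0P; exists l; rewrite in_setC.
by have := cardsC B; rewrite card_ord; lia.
Qed.

Lemma mem_jseq j : reflect (exists2 l, l \notin B & barv k (p l) = j) (j \in jseq p).
Proof.
rewrite mem_sort; apply: (iffP mapP) => [[l] | [l lB <-]].
  by rewrite mem_enum in_setC => lB ->; exists l.
by exists l; rewrite // mem_enum in_setC.
Qed.

Lemma uniq_jseq : uniq (jseq p) = dinjectiveb (fun l => barv k (p l)) (~: B).
Proof. by rewrite (perm_uniq (permEl (perm_sort leq _))). Qed.

Lemma barv_le_last_jseq l : l \notin B -> barv k (p l) <= last 0 (jseq p).
Proof.
move=> lB; have jl : barv k (p l) \in jseq p by apply/mem_jseq; exists l.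
have ltj := jl; rewrite -index_mem in ltj.
rewrite -(nth_index 0 jl) -nth_last.
have js_sorted : sorted leq (jseq p) by exact: (sort_sorted leq_total).
apply: (sorted_leq_nth leq_trans leqnn 0 js_sorted); rewrite ?inE /=;
  by case: (size (jseq p)) ltj => //= sz; lia.
Qed.

Lemma jseq_increasing_inj :
  (forall r, r.+1 < size (jseq p) -> nth 0 (jseq p) r < nth 0 (jseq p) r.+1) ->
  {in ~: B &, injective (fun l => barv k (p l))}.
Proof.
move=> incr; apply/dinjectiveP; rewrite -uniq_jseq.
have : sorted ltn (jseq p) by apply/(sortedP 0).
by rewrite ltn_sorted_uniq_leq => /andP[].
Qed.

Lemma jseq_below_center :
  2 * last 0 (jseq p) < k.-1 -> {in ~: B, forall l, rev_ord (p l) != p l}.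
Proof.
move=> lt l; rewrite in_setC => lB; rewrite rev_ord_fixed.
by have := barv_le_last_jseq lB; lia.
Qed.

Lemma jseq_center : 1 < k -> 2 * last 0 (jseq p) = k.-1 ->
  exists2 l, l \notin B & rev_ord (p l) = p l.
Proof.
move=> k2 ctr; have := mem_last 0 (jseq p); rewrite inE => /orP[/eqP l0 | /mem_jseq[l lB bl]].
  by move: ctr; rewrite l0; lia.
by exists l => //; apply/eqP; rewrite rev_ord_fixed bl ctr.
Qed.

Lemma jseq_repeat : ~~ uniq (jseq p) ->
  exists t u, [/\ t \notin B, u \notin B, t != u & barv k (p t) = barv k (p u)].
Proof.
rewrite uniq_jseq => /dinjectivePn[t tB [u /andP[/= ut uB] btu]].
by exists t, u; rewrite -!in_setC eq_sym.
Qed.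

End JSequence.

(** * The independent rotation group *)

Local Open Scope ring_scope.

Definition sperm_mx (R : ringType) n (s : {perm 'I_n}) (e : 'I_n -> R) : 'M[R]_n :=
  \matrix_(i, j) (if s i == j then e i else 0).

Section SignedPermutationMatrices.
Variables (R : ringType) (n : nat) (s : {perm 'I_n}) (e : 'I_n -> R).

Lemma sperm_mx_rowE (x : 'rV[R]_n) j :
  (x *m sperm_mx s e) ord0 j = x ord0 ((s^-1)%g j) * e ((s^-1)%g j).
Proof.
rewrite mxE (bigD1 ((s^-1)%g j)) //= mxE permKV eqxx big1 ?addr0 // => i ne.
by rewrite mxE; case: eqP => [sij|]; [move: ne; rewrite -sij permK eqxx | rewrite mulr0].
Qed.

Lemma sperm_mx_affineE (x c : 'rV[R]_n) i :
  (x *m sperm_mx s e + (c - c *m sperm_mx s e)) ord0 (s i) =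
  c ord0 (s i) + (x ord0 i - c ord0 i) * e i.
Proof.
rewrite mxE (sperm_mx_rowE x) mxE mxE (sperm_mx_rowE c) permK.
by rewrite mulrBl addrCA.
Qed.

Lemma sperm_mx_orthogonal :
  (forall i, e i ^+ 2 = 1) -> sperm_mx s e *m (sperm_mx s e)^T = 1%:M.
Proof.
move=> e_sq; apply/matrixP => i j; rewrite !mxE (bigD1 (s i)) //= !mxE eqxx.
rewrite big1 ?addr0 => [|l ne]; last by rewrite !mxE eq_sym (negbTE ne) mul0r.
rewrite (inj_eq perm_inj) eq_sym.
by case: eqP => [->|_]; rewrite ?mulr0 // -expr2 e_sq.
Qed.

End SignedPermutationMatrices.

Lemma det_sperm_mx (R : comRingType) n (s : {perm 'I_n}) (e : 'I_n -> R) :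
  \det (sperm_mx s e) = (-1) ^+ s * \prod_i e i.
Proof.
have -> : sperm_mx s e = diag_mx (\row_i e i) *m perm_mx s.
  apply/matrixP => i j; rewrite mul_diag_mx !mxE.
  by case: eqP => _; rewrite ?mulr1 ?mulr0.
rewrite det_mulmx det_diag det_perm mulrC; congr (_ * _).
by apply: eq_bigr => i _; rewrite mxE.
Qed.

Lemma maps_onto_bij (T1 T2 : Type) (f : T1 -> T2) (g : T2 -> T1) S T :
  cancel g f -> (forall x, S x <-> T (f x)) -> maps_onto f S T.
Proof.
move=> gK hST y; split=> [Ty | [x Sx <-]]; last exact/hST.
by exists (g y); rewrite ?gK //; apply/hST; rewrite gK.
Qed.

Section Cubie.
Variables (R : realType) (k n : nat) (p : pos k n).
Hypothesis k2 : (1 < k)%N.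
Local Notation B := (Bset p).

Definition cubie_center : 'rV[R]_n := \row_i ((val (p i))%:R + 2^-1).
Definition face_coord i : R := if val (p i) == 0%N then 0 else k%:R.
Definition face_sign i : R := if val (p i) == 0%N then -1 else 1.

Local Notation o := cubie_center.

Lemma face_sign_pm i : face_sign i = 1 \/ face_sign i = -1.
Proof. by rewrite /face_sign; case: ifP; [right | left]. Qed.

Lemma face_sign_sq i : face_sign i ^+ 2 = 1.
Proof. by case: (face_sign_pm i) => ->; rewrite ?sqrrN expr1n. Qed.

Lemma prod_face_sign (s : {perm 'I_n}) : \prod_i (face_sign i * face_sign (s i)) = 1.
Proof.
rewrite big_split /= [X in _ * X](_ : _ = \prod_i face_sign i); last first.
  by rewrite [RHS](reindex_perm s).
by rewrite -big_split big1 // => i _ /=; rewrite -expr2 face_sign_sq.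
Qed.

Lemma cubie_centerE i : o ord0 i = (val (p i))%:R + 2^-1.
Proof. exact: mxE. Qed.

Lemma face_coordE i : i \in B -> face_coord i = (val (p i))%:R + 2^-1 + face_sign i / 2.
Proof.
rewrite inE /face_coord /face_sign; case: eqP => [-> _ | _ /= /eqP ->]; first lra.
by rewrite -{1}(prednK (ltnW k2)) -natr1; lra.
Qed.

Lemma cubieE (x : 'rV[R]_n) : cubie p x <->
  forall i, (val (p i))%:R <= x ord0 i /\ x ord0 i <= (val (p i))%:R + 1.
Proof. by split=> cx i; move: (cx i); rewrite -[((val (p i)).+1)%:R : R]natr1. Qed.

Section Construction.
Variables (s : {perm 'I_n}) (e : 'I_n -> R).
Hypotheses (ps : perm_on B s) (e_sq : forall i, e i ^+ 2 = 1)
  (e_Bset : forall l, l \in B -> e l = face_sign l * face_sign (s l)).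

Let A := sperm_mx s e.
Let f x := x *m A + (o - o *m A).

Let e_pm i : e i = 1 \/ e i = -1.
Proof. by move/eqP: (e_sq i); rewrite sqrf_eq1 => /orP[] /eqP; [left | right]. Qed.

Let f_coord x i : f x ord0 (s i) = o ord0 (s i) + (x ord0 i - o ord0 i) * e i.
Proof. exact: sperm_mx_affineE. Qed.

Lemma cubie_sperm_affine x : cubie p x <-> cubie p (f x).
Proof.
rewrite !cubieE; split=> cx i.
  rewrite -[i](permKV s) f_coord !cubie_centerE; have := cx ((s^-1)%g i).
  by case: (e_pm ((s^-1)%g i)) => ->; lra.
by have := cx (s i); rewrite f_coord !cubie_centerE; case: (e_pm i) => ->; lra.
Qed.

Lemma oface_sperm_affine l x : l \in B -> oface p l x <-> oface p (s l) (f x).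
Proof.
move=> lB; rewrite /oface cubie_sperm_affine; apply: and_iff_compat_l.
split=> xF t tB tl; rewrite -/(face_coord t).
  set u := (s^-1)%g t.
  have uB : u \in B by rewrite (perm_closed _ (perm_onV ps)).
  have ul : u != l by apply: contra tl => /eqP <-; rewrite permKV.
  have xu : x ord0 u = face_coord u := xF u uB ul.
  have suB : s u \in B by rewrite permKV.
  rewrite -[t](permKV s) -/u f_coord xu !face_coordE // e_Bset // !cubie_centerE.
  by case: (face_sign_pm u) => ->; case: (face_sign_pm (s u)) => ->; lra.
have stB : s t \in B by rewrite (perm_closed _ ps).
have : f x ord0 (s t) = face_coord (s t) by apply: xF; rewrite ?(inj_eq perm_inj).
rewrite f_coord !face_coordE // e_Bset // !cubie_centerE.
by case: (face_sign_pm t) => ->; case: (face_sign_pm (s t)) => ->; lra.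
Qed.

Lemma ind_rot_of_sperm : (-1) ^+ s * \prod_i e i = 1 -> ind_rot R p s.
Proof.
move=> dete; split=> //; exists A, (o - o *m A); split.
  by split; [apply: sperm_mx_orthogonal | rewrite det_sperm_mx].
have orthA' : A^T *m A = 1%:M by apply: mulmx1C; apply: sperm_mx_orthogonal.
have fK : cancel (fun y => (y - (o - o *m A)) *m A^T) f.
  by move=> y; rewrite /f -mulmxA orthA' mulmx1 subrK.
split=> [|l lB]; apply: (maps_onto_bij fK) => x.
  exact: cubie_sperm_affine.
exact: oface_sperm_affine.
Qed.

End Construction.

Section Rigidity.
Variables (s : {perm 'I_n}) (A : 'M[R]_n) (b : 'rV[R]_n).
Hypotheses (allB : forall i, i \in B) (n2 : (1 < n)%N) (orthA : A *m A^T = 1%:M)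
  (faces : forall l x, oface p l x -> oface p (s l) (x *m A + b)).

(* [corner] lies on every orientation face, hence is fixed; [edge l] lies on
   face [l], and its image on face [s l] pins down row [l] of [A]. *)
Let corner : 'rV[R]_n := \row_i face_coord i.
Let edge l := corner - face_sign l *: delta_mx 0 l.

Let corner_oface l : oface p l corner.
Proof.
split=> [|t _ _]; last by rewrite mxE.
apply/cubieE => i; rewrite mxE face_coordE //.
by case: (face_sign_pm i) => ->; lra.
Qed.

Let corner_fixed : corner *m A + b = corner.
Proof.
apply/rowP => j.
have [l slj] : exists l, s l != j.
  have [a [a' aa']] : exists a a' : 'I_n, a != a'.
    by exists (Ordinal (ltnW n2)), (Ordinal n2).
  case: (eqVneq (s a) j) => [<-|saj]; last by exists a.
  by exists a'; rewrite (inj_eq perm_inj) eq_sym.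
have jsl : j != s l by rewrite eq_sym.
by rewrite ((faces (corner_oface l)).2 j (allB j) jsl) mxE.
Qed.

Let edge_oface l : oface p l (edge l).
Proof.
split=> [|t _ tl]; last by rewrite !mxE (negbTE tl) andbF mulr0 subr0.
apply/cubieE => i; rewrite !mxE face_coordE // eqxx /=.
case: (eqVneq i l) => [->|_]; rewrite ?mulr1 ?mulr0.
  by case: (face_sign_pm l) => ->; lra.
by case: (face_sign_pm i) => ->; lra.
Qed.

Let edge_image l : edge l *m A + b = corner - face_sign l *: row l A.
Proof. by rewrite mulmxBl -scalemxAl -rowE addrAC corner_fixed. Qed.

Lemma rigid_offdiag l j : j != s l -> A l j = 0.
Proof.
move=> jsl; have := (faces (edge_oface l)).2 j (allB j) jsl.
rewrite edge_image !mxE => /eqP; rewrite subr_eq addrC -subr_eq subrr eq_sym.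
by rewrite mulf_eq0 => /orP[/eqP|/eqP //]; case: (face_sign_pm l) => ->; lra.
Qed.

Lemma rigid_diag l : A l (s l) = face_sign l * face_sign (s l).
Proof.
have a_sq : A l (s l) ^+ 2 = 1.
  have := congr1 (fun M : 'M_n => M l l) orthA; rewrite !mxE eqxx (bigD1 (s l)) //=.
  rewrite big1 ?addr0 => [aa1|j jsl]; first by rewrite expr2 -[RHS]aa1 mxE.
  by rewrite rigid_offdiag ?mul0r.
have := (faces (edge_oface l)).1; rewrite cubieE => /(_ (s l)).
rewrite edge_image !mxE face_coordE //.
move/eqP: a_sq; rewrite sqrf_eq1 => /orP[] /eqP ->;
  by case: (face_sign_pm l) => ->; case: (face_sign_pm (s l)) => ->; lra.
Qed.

Lemma rigid_sperm : A = sperm_mx s (fun l => face_sign l * face_sign (s l)).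
Proof.
apply/matrixP => l j; rewrite mxE; case: eqP => [<-|/eqP jsl].
  exact: rigid_diag.
by apply: rigid_offdiag; rewrite eq_sym.
Qed.

End Rigidity.

Lemma ind_rot_even s : (forall i, i \in B) -> (1 < n)%N -> ind_rot R p s -> ~~ odd_perm s.
Proof.
move=> allB n2 [_ [A [b [[orthA detA] [_ hf]]]]].
have faces l x : oface p l x -> oface p (s l) (x *m A + b).
  by move=> Fx; apply/(hf l (allB l)); exists x.
move: detA; rewrite (rigid_sperm allB n2 orthA faces) det_sperm_mx prod_face_sign mulr1.
by case: (odd_perm s) => //; rewrite expr1; lra.
Qed.

Lemma ind_rot_Alt : (forall i, i \in B) -> (1 < n)%N ->
  forall s, ind_rot R p s <-> AltB B s.
Proof.
move=> allB n2 s; split=> [rs | [ps evens]].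
  by split; [case: rs | apply: ind_rot_even].
apply: (@ind_rot_of_sperm s (fun l => face_sign l * face_sign (s l))) => // [i|].
  by rewrite exprMn !face_sign_sq mulr1.
by rewrite prod_face_sign (negbTE evens) mulr1.
Qed.

Lemma ind_rot_Sym t : t \notin B -> forall s, ind_rot R p s <-> SymB B s.
Proof.
move=> tB s; split=> [[] // | ps].
pose e l := face_sign l * face_sign (s l) * (if l == t then (-1) ^+ s else 1).
apply: (@ind_rot_of_sperm s e) => // [i | l lB |].
- rewrite !exprMn !face_sign_sq !mul1r.
  by case: eqP => _; rewrite ?sqrr_sign ?expr1n.
- by rewrite /e ifN ?mulr1 //; apply: contraNneq tB => <-.
rewrite /e big_split /= prod_face_sign mul1r (bigD1 t) //= eqxx big1 ?mulr1.
  by rewrite -expr2 sqrr_sign.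
by move=> i /negbTE ->.
Qed.

End Cubie.

Local Close Scope ring_scope.

Theorem mainTheorem2 (R : realType) (k n : nat) (p : pos k n) :
  2 <= k -> 3 <= n -> 2 <= #|Bset p| ->
  let m := #|Bset p| in
  let js := jseq p in
  (* (a) *)
  ((m = n -> forall s, ind_rot R p s <-> AltB (Bset p) s) /\
   (m < n -> forall s, ind_rot R p s <-> SymB (Bset p) s)) /\
  (* (b) *)
  ((m = n \/
    ((forall r, r.+1 < size js -> nth 0 js r < nth 0 js r.+1) /\
     2 * last 0 js < k.-1)) ->
     forall s, dep_rot p s <-> AltB (Bset p) s) /\
  ((m < n /\
    (2 * last 0 js = k.-1 \/
     exists r, r.+1 < size js /\ nth 0 js r = nth 0 js r.+1 /\ 2 * nth 0 js r < k.-1)) ->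
     forall s, dep_rot p s <-> SymB (Bset p) s).
Proof.
move=> k2 n3 _ m js; have n2 : 1 < n := ltnW n3.
split; [split | split].
- by move=> mn; apply: ind_rot_Alt => //; apply: Bset_full.
- by case/notin_Bset_exists => t tB; apply: ind_rot_Sym tB.
- case=> [mn | [incr ctr]]; apply: dep_rot_Alt => //.
  + by move=> l u; rewrite in_setC Bset_full.
  + by move=> l; rewrite in_setC Bset_full.
  + exact: jseq_increasing_inj.
  + exact: jseq_below_center.
- case=> _ [ctr | [r [ltr [eqr _]]]].
    by have [t tB tctr] := jseq_center k2 ctr; apply: dep_rot_Sym_central tB tctr.
  have /jseq_repeat[t [u [tB uB tu btu]]] : ~~ uniq js.
    by apply/(uniqPn 0); exists r, r.+1.
  exact: dep_rot_Sym_pair tB uB tu btu.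
Qed.
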